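(* Let $I$ be a nonempty set and let $A$ be a topologically independent subset of $(\mathbb{C}^\times)^I$. Then for every $i\in I$ the set $\{a\in A : |a(i)|\neq 1\}$ is finite.
   Context: $\mathbb{C}^\times$ is the multiplicative group of nonzero complex numbers with the Euclidean topology; $(\mathbb{C}^\times)^I$ carries the product topology and coordinatewise multiplication, with neutral element $e$ the constant function $1$. A subset $A$ of an abelian topological group $G$ (multiplicative notation, neutral element $e$) is topologically independent if $e\notin A$ and for every neighborhood $W$ of $e$ there is a neighborhood $U$ of $e$ such that for every finite $F\subseteq A$ and every family of integers $\{z_a: a\in F\}$, the condition $\prod_{a\in F}a^{z_a}\in U$ implies $a^{z_a}\in W$ for all $a\in F$. *)

From Stdlib Require Import Reals ZArith List.
From Coquelicot Require Export Coquelicot.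
Open Scope R_scope.

Fixpoint Cpown (x : C) (n : nat) : C :=
  match n with O => RtoC 1 | S m => Cmult x (Cpown x m) end.

Definition Czpow (x : C) (z : Z) : C :=
  match z with
  | Z0 => RtoC 1
  | Zpos p => Cpown x (Pos.to_nat p)
  | Zneg p => Cinv (Cpown x (Pos.to_nat p))
  end.

(* elements of (C^x)^I are functions I -> C with nonzero values *)
Definition in_group {I : Type} (x : I -> C) : Prop := forall i, x i <> RtoC 0.

Definition e_grp {I : Type} : I -> C := fun _ => RtoC 1.

(* W is a neighborhood of e in (C^x)^I (product of Euclidean topologies):
   it contains a basic open set {x | |x j - 1| < eps for j in finite J}. *)
Definition nbhd_e {I : Type} (W : (I -> C) -> Prop) : Prop :=
  exists (J : list I) (eps : R), 0 < eps /\
    forall x, in_group x -> (forall j, In j J -> Cmod (Cminus (x j) (RtoC 1)) < eps) -> W x.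

(* coordinatewise product  prod_{a in F} a^{z_a}  for a finite F (list without duplicates) *)
Definition prod_pow {I : Type} (F : list (I -> C)) (z : (I -> C) -> Z) : I -> C :=
  fun i => fold_right (fun a acc => Cmult (Czpow (a i) (z a)) acc) (RtoC 1) F.

Definition zpow_grp {I : Type} (a : I -> C) (k : Z) : I -> C := fun i => Czpow (a i) k.

Definition top_indep {I : Type} (A : (I -> C) -> Prop) : Prop :=
  ~ A e_grp /\
  forall W, nbhd_e W -> exists U, nbhd_e U /\
    forall (F : list (I -> C)) (z : (I -> C) -> Z),
      NoDup F -> (forall a, In a F -> A a) ->
      U (prod_pow F z) -> forall a, In a F -> W (zpow_grp a (z a)).

(* Suppose infinitely many a in A have |a(i)| <> 1, and take W = {x : |x(i) - 1| < 1/2}.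
   Topological independence gives a basic neighbourhood U controlled by finitely many
   coordinates J and a radius eps.  In polar coordinates the coordinates in J of a product
   of powers of elements a_1, ..., a_n of A are governed by 2|J| real linear forms in the
   exponents; once n > 2|J|, Dirichlet's box principle gives a nonzero integer exponent
   vector making all these forms as small as we like.  Multiplying it by a large integer N
   keeps the forms small, so the product lies in U, while some a_k^(N z_k) has modulus
   exp (N z_k ln|a_k(i)|) far from 1, i.e. lies outside W: a contradiction. *)

From Stdlib Require Import Reals ZArith List Lia Lra Classical ClassicalEpsilon.
From Coquelicot Require Import Coquelicot.
Open Scope R_scope.

Definition polar (u t : R) : C := (exp u * cos t, exp u * sin t).

Lemma polar_mult u1 t1 u2 t2 : Cmult (polar u1 t1) (polar u2 t2) = polar (u1 + u2) (t1 + t2).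
Proof. unfold polar, Cmult; simpl. rewrite exp_plus, cos_plus, sin_plus. f_equal; ring. Qed.

Lemma polar_0 : polar 0 0 = RtoC 1.
Proof. unfold polar, RtoC. rewrite exp_0, cos_0, sin_0. f_equal; ring. Qed.

Lemma Cmod_polar u t : Cmod (polar u t) = exp u.
Proof.
  unfold Cmod, polar; cbn [fst snd].
  replace ((exp u * cos t) ^ 2 + (exp u * sin t) ^ 2) with (exp u ^ 2)
    by (pose proof (sin2_cos2 t) as Ht; unfold Rsqr in Ht; nra).
  apply sqrt_pow2. left; apply exp_pos.
Qed.

Lemma polar_neq0 u t : polar u t <> RtoC 0.
Proof.
  intro H. pose proof (exp_pos u). rewrite <- (Cmod_polar u t), H, Cmod_0 in *. lra.
Qed.

Lemma polar_inv u t : Cinv (polar u t) = polar (- u) (- t).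
Proof.
  rewrite <- (Cmult_1_r (Cinv (polar u t))), <- polar_0.
  replace 0 with (u + - u) at 1 by ring. replace 0 with (t + - t) by ring.
  rewrite <- polar_mult, Cmult_assoc, Cinv_l by apply polar_neq0. apply Cmult_1_l.
Qed.

Lemma Cpown_polar u t n : Cpown (polar u t) n = polar (INR n * u) (INR n * t).
Proof.
  induction n as [|n IH]; simpl Cpown.
  - rewrite !Rmult_0_l. symmetry; apply polar_0.
  - rewrite IH, polar_mult, S_INR. f_equal; ring.
Qed.

Lemma Czpow_polar u t k : Czpow (polar u t) k = polar (IZR k * u) (IZR k * t).
Proof.
  destruct k as [|p|p]; simpl Czpow.
  - rewrite !Rmult_0_l. symmetry; apply polar_0.
  - rewrite Cpown_polar, INR_IZR_INZ, positive_nat_Z. reflexivity.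
  - rewrite Cpown_polar, polar_inv, INR_IZR_INZ, positive_nat_Z, <- Pos2Z.opp_pos, opp_IZR.
    f_equal; ring.
Qed.

Lemma unit_circle_angle x y : x ^ 2 + y ^ 2 = 1 -> exists t, cos t = x /\ sin t = y.
Proof.
  intro H.
  assert (Hx : -1 <= x <= 1) by (split; nra).
  assert (Hs : sqrt (1 - x²) = Rabs y).
  { rewrite <- sqrt_Rsqr_abs. f_equal. unfold Rsqr. lra. }
  destruct (Rle_or_lt 0 y) as [Hy|Hy].
  - exists (acos x). rewrite cos_acos, sin_acos, Hs, Rabs_right by lra. auto.
  - exists (- acos x). rewrite cos_neg, sin_neg, cos_acos, sin_acos, Hs, Rabs_left by lra.
    split; [auto|ring].
Qed.

Definition Carg (w : C) : R := epsilon (inhabits 0) (fun t => w = polar (ln (Cmod w)) t).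

Lemma polar_Carg w : w <> RtoC 0 -> w = polar (ln (Cmod w)) (Carg w).
Proof.
  destruct w as [x y]; intro Hw. unfold Carg. apply epsilon_spec.
  pose proof (proj1 (Cmod_gt_0 _) Hw) as Hm. set (m := Cmod (x, y)) in *.
  assert (Hm2 : m ^ 2 = x ^ 2 + y ^ 2).
  { unfold m, Cmod; cbn [fst snd]. rewrite pow2_sqrt; nra. }
  destruct (unit_circle_angle (x / m) (y / m)) as [t [Hc Hs]].
  { field_simplify; [|lra]. rewrite <- Hm2. field. lra. }
  exists t. unfold polar. rewrite exp_ln, Hc, Hs by lra. f_equal; field; lra.
Qed.

Lemma continuity_pt_Rabs f x eps : continuity_pt f x -> 0 < eps ->
  exists d, 0 < d /\ forall y, Rabs (y - x) < d -> Rabs (f y - f x) < eps.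
Proof.
  intros Hf He. destruct (Hf eps He) as [d [Hd Hfd]]. exists d. split; [exact Hd|].
  intros y Hy. destruct (Req_dec x y) as [<-|Hxy].
  - rewrite Rminus_diag, Rabs_R0. exact He.
  - apply (Hfd y). repeat split; auto.
Qed.

Lemma Cmod_le_Rabs_add x y : Cmod (x, y) <= Rabs x + Rabs y.
Proof.
  replace (x, y) with (Cplus (RtoC x) (Cmult Ci (RtoC y)))
    by (unfold Cplus, Cmult, Ci, RtoC; simpl; f_equal; ring).
  rewrite <- !Cmod_R, <- (Rmult_1_l (Cmod y)), <- Cmod_Ci, <- Cmod_mult.
  apply Cmod_triangle.
Qed.

Lemma Cmod_triangle_inv x y : Rabs (Cmod x - Cmod y) <= Cmod (Cminus x y).
Proof.
  assert (Hx : Cmod x <= Cmod (Cminus x y) + Cmod y).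
  { replace x with (Cplus (Cminus x y) y) at 1 by ring. apply Cmod_triangle. }
  assert (Hy : Cmod y <= Cmod (Cminus x y) + Cmod x).
  { replace y with (Cplus (Copp (Cminus x y)) x) at 1 by ring.
    rewrite <- (Cmod_opp (Cminus x y)). apply Cmod_triangle. }
  apply Rabs_le. lra.
Qed.

Lemma polar_near_1 eps : 0 < eps ->
  exists d, 0 < d /\ forall u t, Rabs u < d -> Rabs t < d -> Cmod (Cminus (polar u t) 1) < eps.
Proof.
  intro He.
  destruct (continuity_pt_Rabs exp 0 (eps / 2)) as [d1 [Hd1 Hexp]];
    [apply derivable_continuous_pt, derivable_pt_exp | lra |].
  destruct (continuity_pt_Rabs cos 0 (eps / 4)) as [d2 [Hd2 Hcos]]; [apply continuity_cos | lra |].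
  destruct (continuity_pt_Rabs sin 0 (eps / 4)) as [d3 [Hd3 Hsin]]; [apply continuity_sin | lra |].
  exists (Rmin d1 (Rmin d2 d3)). split; [repeat apply Rmin_pos; assumption|].
  intros u t Hu Ht.
  pose proof (Rmin_l d1 (Rmin d2 d3)). pose proof (Rmin_r d1 (Rmin d2 d3)).
  pose proof (Rmin_l d2 d3). pose proof (Rmin_r d2 d3).
  specialize (Hexp u ltac:(rewrite Rminus_0_r; lra)).
  specialize (Hcos t ltac:(rewrite Rminus_0_r; lra)).
  specialize (Hsin t ltac:(rewrite Rminus_0_r; lra)).
  rewrite exp_0 in Hexp. rewrite cos_0 in Hcos. rewrite sin_0, Rminus_0_r in Hsin.
  replace (Cminus (polar u t) 1)
    with (Cplus (Cmult (RtoC (exp u - 1)) (polar 0 t)) (cos t - 1, sin t))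
    by (unfold polar, Cminus, Cplus, Cmult, Copp, RtoC; simpl; rewrite exp_0; f_equal; ring).
  eapply Rle_lt_trans; [apply Cmod_triangle|].
  rewrite Cmod_mult, Cmod_R, Cmod_polar, exp_0, Rmult_1_r.
  pose proof (Cmod_le_Rabs_add (cos t - 1) (sin t)). lra.
Qed.

Lemma polar_far_from_1 u t : 1 <= Rabs u -> / 2 <= Cmod (Cminus (polar u t) 1).
Proof.
  intro Hu. eapply Rle_trans; [|apply Cmod_triangle_inv].
  rewrite Cmod_polar, Cmod_1.
  pose proof (exp_ineq1_le u). pose proof (exp_ineq1_le (- u)).
  assert (Hinv : exp u * exp (- u) = 1) by (rewrite <- exp_plus, Rplus_opp_r; apply exp_0).
  pose proof (exp_pos u). pose proof (exp_pos (- u)).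
  destruct (Rle_or_lt 0 u).
  - rewrite Rabs_right in * by lra. lra.
  - rewrite Rabs_left in * by nra. nra.
Qed.

Definition lin_comb {X} (F : list X) (z : X -> Z) (c : X -> R) : R :=
  fold_right (fun a acc => IZR (z a) * c a + acc) 0 F.

Lemma lin_comb_sub {X} (F : list X) z1 z2 c :
  lin_comb F (fun a => (z1 a - z2 a)%Z) c = lin_comb F z1 c - lin_comb F z2 c.
Proof. induction F as [|a F IH]; simpl; [ring|]. rewrite IH, minus_IZR. ring. Qed.

Lemma lin_comb_scale {X} (F : list X) z c k :
  lin_comb F (fun a => (k * z a)%Z) c = IZR k * lin_comb F z c.
Proof. induction F as [|a F IH]; simpl; [ring|]. rewrite IH, mult_IZR. ring. Qed.

Lemma lin_comb_bound {X} (F : list X) z c Mz L :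
  (forall a, In a F -> Rabs (IZR (z a)) <= Mz) -> (forall a, In a F -> Rabs (c a) <= L) ->
  Rabs (lin_comb F z c) <= INR (length F) * (Mz * L).
Proof.
  induction F as [|a F IH]; intros Hz Hc; simpl lin_comb.
  - rewrite Rabs_R0. simpl. lra.
  - cbn [length]. rewrite S_INR. eapply Rle_trans; [apply Rabs_triang|].
    rewrite Rabs_mult.
    assert (Ha : Rabs (IZR (z a)) * Rabs (c a) <= Mz * L).
    { apply Rmult_le_compat; try apply Rabs_pos; [apply Hz | apply Hc]; simpl; auto. }
    assert (HF : Rabs (lin_comb F z c) <= INR (length F) * (Mz * L)).
    { apply IH; intros b Hb; [apply Hz | apply Hc]; simpl; auto. }
    lra.
Qed.

Lemma prod_pow_polar {I} (F : list (I -> C)) z j u t :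
  (forall a, In a F -> a j = polar (u a) (t a)) ->
  prod_pow F z j = polar (lin_comb F z u) (lin_comb F z t).
Proof.
  unfold prod_pow. induction F as [|a F IH]; intros H; simpl.
  - symmetry; apply polar_0.
  - rewrite IH by (intros b Hb; apply H; simpl; auto).
    rewrite H, Czpow_polar, polar_mult by (simpl; auto). f_equal; ring.
Qed.

Fixpoint tuples {X} (s : list X) (n : nat) : list (list X) :=
  match n with
  | O => nil :: nil
  | S n => flat_map (fun x => map (cons x) (tuples s n)) s
  end.

Lemma length_tuples {X} (s : list X) n : length (tuples s n) = (length s ^ n)%nat.
Proof.
  induction n as [|n IH]; simpl; [reflexivity|].
  rewrite <- IH. generalize (tuples s n) as T. clear IH.
  induction s as [|x s IHs]; intro T; simpl; [reflexivity|].
  rewrite length_app, length_map, IHs. reflexivity.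
Qed.

Lemma In_tuples {X} (s : list X) n l : In l (tuples s n) <-> length l = n /\ incl l s.
Proof.
  revert l; induction n as [|n IH]; intro l; simpl.
  - split; [intros [<-|[]]; split; [reflexivity | intros ? []]|].
    intros [Hl _]. left. destruct l; [reflexivity | discriminate].
  - rewrite in_flat_map. split.
    + intros [x [Hx Hm]]. apply in_map_iff in Hm. destruct Hm as [l' [<- Hl']].
      apply IH in Hl'. destruct Hl' as [Hn Hs]. split; [simpl; lia|].
      intros y [<-|Hy]; auto.
    + intros [Hn Hs]. destruct l as [|x l]; [discriminate|]. exists x.
      split; [apply Hs; simpl; auto|]. apply in_map, IH.
      split; [simpl in Hn; lia | intros y Hy; apply Hs; simpl; auto].
Qed.

Lemma NoDup_tuples {X} (s : list X) n : NoDup s -> NoDup (tuples s n).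
Proof.
  intro Hs. induction n as [|n IH]; simpl; [repeat constructor; intros []|].
  revert IH. generalize (tuples s n) as T. intros T HT.
  induction Hs as [|x s Hx Hs IHs]; simpl; [constructor|].
  apply NoDup_app.
  - apply NoDup_map_NoDup_ForallPairs; [|exact HT]. intros a b _ _ H. now injection H.
  - exact IHs.
  - intros l Hl Hl'. apply in_map_iff in Hl. destruct Hl as [l1 [<- _]].
    apply in_flat_map in Hl'. destruct Hl' as [y [Hy Hm]]. apply in_map_iff in Hm.
    destruct Hm as [l2 [Heq _]]. injection Heq as -> _. contradiction.
Qed.

Lemma pigeonhole {X Y} (f : X -> Y) (l : list X) (l' : list Y) :
  NoDup l -> (forall x, In x l -> In (f x) l') -> (length l' < length l)%nat ->
  exists x y, In x l /\ In y l /\ x <> y /\ f x = f y.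
Proof.
  intros Hl Hf Hlen. apply NNPP; intro Hno.
  assert (Hinj : NoDup (map f l)).
  { apply NoDup_map_NoDup_ForallPairs; [|exact Hl]. intros x y Hx Hy Hxy.
    apply NNPP; intro Hne. apply Hno. exists x, y. auto. }
  assert (Hincl : incl (map f l) l').
  { intros y Hy. apply in_map_iff in Hy. destruct Hy as [x [<- Hx]]. auto. }
  pose proof (NoDup_incl_length Hinj Hincl). rewrite length_map in *. lia.
Qed.

Fixpoint coeff_of {X} (F : list X) (v : list Z) (a : X) : Z :=
  match F, v with
  | b :: F, k :: v => if excluded_middle_informative (a = b) then k else coeff_of F v a
  | _, _ => 0%Z
  end.

Lemma coeff_of_bound {X} (F : list X) v a Mz : 0 <= Mz ->
  (forall k, In k v -> Rabs (IZR k) <= Mz) -> Rabs (IZR (coeff_of F v a)) <= Mz.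
Proof.
  intros HM; revert v; induction F as [|b F IH]; intros [|k v] Hv; simpl;
    try (rewrite Rabs_R0; exact HM).
  destruct (excluded_middle_informative (a = b)); [apply Hv; simpl; auto|].
  apply IH. intros k' Hk'. apply Hv; simpl; auto.
Qed.

Lemma coeff_of_inj {X} (F : list X) v1 v2 : NoDup F ->
  length v1 = length F -> length v2 = length F ->
  (forall a, In a F -> coeff_of F v1 a = coeff_of F v2 a) -> v1 = v2.
Proof.
  intro HF; revert v1 v2; induction HF as [|b F Hb HF IH];
    intros [|k1 v1] [|k2 v2] H1 H2 Hc; simpl in *; try discriminate; try reflexivity.
  assert (Hk : k1 = k2).
  { specialize (Hc b (or_introl eq_refl)).
    destruct (excluded_middle_informative (b = b)); [exact Hc | contradiction]. }
  assert (Hv : v1 = v2).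
  { apply IH; [lia | lia |]. intros a Ha. specialize (Hc a (or_intror Ha)).
    destruct (excluded_middle_informative (a = b)) as [->|]; [contradiction | exact Hc]. }
  now rewrite Hk, Hv.
Qed.

Lemma list_bound {X} (l : list X) (g : X -> R) : exists L, 0 < L /\ forall x, In x l -> g x <= L.
Proof.
  induction l as [|a l [L [HL Hl]]]; [exists 1; split; [lra | intros ? []]|].
  exists (Rmax (g a) L). split; [eapply Rlt_le_trans; [exact HL | apply Rmax_r]|].
  intros x [<-|Hx]; [apply Rmax_l | eapply Rle_trans; [apply Hl; exact Hx | apply Rmax_r]].
Qed.

(* [cell B d s = k] exactly when [(s + B) / d] lies in [[k - 1, k)]. *)
Definition cell (B d s : R) : nat := Z.to_nat (up ((s + B) / d)).

Lemma cell_lt B d s K : 0 < d -> - B <= s <= B -> 2 * B / d + 1 < INR K -> (cell B d s < K)%nat.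
Proof.
  intros Hd Hs HK.
  assert (Hq : 0 <= (s + B) / d <= 2 * B / d)
    by (split; unfold Rdiv; [apply Rmult_le_pos; [lra | left; now apply Rinv_0_lt_compat]
                            | apply Rmult_le_compat_r; [left; now apply Rinv_0_lt_compat | lra]]).
  destruct (archimed ((s + B) / d)) as [Hup1 Hup2].
  apply INR_lt. unfold cell. rewrite INR_IZR_INZ, Z2Nat.id by (apply le_IZR; lra). lra.
Qed.

Lemma cell_eq_close B d s1 s2 : 0 < d -> - B <= s1 -> - B <= s2 ->
  cell B d s1 = cell B d s2 -> Rabs (s1 - s2) < d.
Proof.
  intros Hd Hs1 Hs2 Hc. unfold cell in Hc.
  set (q1 := (s1 + B) / d) in *. set (q2 := (s2 + B) / d) in *.
  assert (Hq1 : 0 <= q1) by (unfold q1, Rdiv; apply Rmult_le_pos; [lra | left; now apply Rinv_0_lt_compat]).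
  assert (Hq2 : 0 <= q2) by (unfold q2, Rdiv; apply Rmult_le_pos; [lra | left; now apply Rinv_0_lt_compat]).
  destruct (archimed q1), (archimed q2).
  apply Z2Nat.inj in Hc; [| apply le_IZR; lra | apply le_IZR; lra].
  replace (s1 - s2) with (d * (q1 - q2)) by (unfold q1, q2; field; lra).
  rewrite Rabs_mult, (Rabs_right d) by lra.
  rewrite Hc in *. assert (Rabs (q1 - q2) < 1) by (apply Rabs_def1; lra). nra.
Qed.

Lemma box_outnumbers_cells (r n C : nat) :
  (r < n)%nat -> ((C * S (C ^ r)) ^ r < S (C ^ r) ^ n)%nat.
Proof.
  intro Hrn. set (M := (C ^ r)%nat).
  rewrite Nat.pow_mul_l. fold M.
  assert (Hpos : (0 < S M ^ r)%nat) by (apply Nat.neq_0_lt_0, Nat.pow_nonzero; lia).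
  assert (Hmono : (S M ^ S r <= S M ^ n)%nat) by (apply Nat.pow_le_mono_r; lia).
  simpl in Hmono. nia.
Qed.

Lemma dirichlet_small_combination {X} (F : list X) (cs : list (X -> R)) d :
  NoDup F -> 0 < d -> (length cs < length F)%nat ->
  exists z : X -> Z, (exists a, In a F /\ z a <> 0%Z) /\
    forall c, In c cs -> Rabs (lin_comb F z c) < d.
Proof.
  intros HF Hd Hlen. set (n := length F) in *. set (r := length cs) in *.
  destruct (list_bound (list_prod cs F) (fun p => Rabs (fst p (snd p)))) as [L [HL HcL]].
  assert (Hc : forall c a, In c cs -> In a F -> Rabs (c a) <= L)
    by (intros c a Hc Ha; apply (HcL (c, a)), in_prod; assumption).
  (* With C > 2 n L / d + 1 and M = C^r, the (M+1)^n coefficient vectors in {0..M}^n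
     outnumber the (C (M+1))^r patterns of cells of width d covering the range [-B, B]. *)
  destruct (INR_unbounded (2 * INR n * L / d + 1)) as [C HC].
  set (M := (C ^ r)%nat). set (B := INR n * (INR M * L)).
  set (sums := fun v c => lin_comb F (coeff_of F v) c).
  set (box := tuples (map Z.of_nat (seq 0 (S M))) n).
  set (cells := fun v => map (fun c => cell B d (sums v c)) cs).
  assert (Hbox : forall v, In v box ->
            length v = n /\ forall c, In c cs -> - B <= sums v c <= B).
  { intros v Hv. apply In_tuples in Hv. destruct Hv as [Hvl Hvs]. split; [exact Hvl|].
    intros c Hcs. apply Rabs_le_between.
    apply lin_comb_bound; [|intros a Ha; apply Hc; assumption].
    intros a _. apply coeff_of_bound; [apply pos_INR|].
    intros k Hk. apply Hvs, in_map_iff in Hk. destruct Hk as [m [<- Hm]]. apply in_seq in Hm.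
    rewrite <- INR_IZR_INZ, Rabs_right by (apply Rle_ge, pos_INR). apply le_INR. lia. }
  destruct (pigeonhole cells box (tuples (seq 0 (C * S M)) r))
    as [v1 [v2 [Hv1 [Hv2 [Hne Heq]]]]].
  - apply NoDup_tuples, NoDup_map_NoDup_ForallPairs; [intros ? ? _ _; lia | apply seq_NoDup].
  - intros v Hv. apply In_tuples. unfold cells. rewrite length_map. split; [reflexivity|].
    intros k Hk. apply in_map_iff in Hk. destruct Hk as [c [<- Hcs]]. apply in_seq.
    split; [lia|]. apply cell_lt; [exact Hd | apply Hbox; assumption|].
    rewrite Nat.add_0_l, mult_INR, S_INR. unfold B. pose proof (pos_INR M).
    replace (2 * (INR n * (INR M * L)) / d) with ((2 * INR n * L / d) * INR M) by (field; lra).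
    assert (0 <= 2 * INR n * L / d)
      by (unfold Rdiv; apply Rmult_le_pos; [pose proof (pos_INR n); nra | left; now apply Rinv_0_lt_compat]).
    nra.
  - unfold box. rewrite !length_tuples, !length_map, !length_seq. now apply box_outnumbers_cells.
  - destruct (Hbox v1 Hv1) as [Hl1 Hb1]. destruct (Hbox v2 Hv2) as [Hl2 Hb2].
    exists (fun a => (coeff_of F v1 a - coeff_of F v2 a)%Z). split.
    + apply NNPP. intro Hz. apply Hne, (coeff_of_inj F); try assumption.
      intros a Ha. apply NNPP. intro Ha'. apply Hz. exists a. split; [exact Ha | lia].
    + intros c Hcs. rewrite lin_comb_sub. apply (cell_eq_close B); [exact Hd | apply Hb1 | apply Hb2 |]; try assumption.
      exact (proj1 map_ext_in_iff Heq c Hcs).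
Qed.

Lemma long_lists_of_infinite {X} (P : X -> Prop) :
  ~ (exists l, forall x, P x -> In x l) ->
  forall k, exists l, length l = k /\ NoDup l /\ forall x, In x l -> P x.
Proof.
  intros Hinf k. induction k as [|k [l [Hl [Hnd HP]]]].
  - exists nil. repeat split; [constructor | intros ? []].
  - assert (Hx : exists x, P x /\ ~ In x l).
    { apply NNPP. intro Hno. apply Hinf. exists l. intros x Hx. apply NNPP. eauto. }
    destruct Hx as [x [Hx Hxl]]. exists (x :: l). repeat split.
    + simpl. lia.
    + constructor; assumption.
    + intros y [<-|Hy]; auto.
Qed.

Lemma exists_nat_mult_ge_1 {X} (F : list X) (g : X -> R) : (forall a, In a F -> 0 < g a) ->
  exists N : nat, 0 < INR N /\ forall a, In a F -> 1 <= INR N * g a.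
Proof.
  induction F as [|b F IH]; intro Hg.
  - exists 1%nat. split; [simpl; lra | intros ? []].
  - destruct IH as [N [HN HF]]; [intros a Ha; apply Hg; simpl; auto|].
    assert (Hb : 0 < g b) by (apply Hg; simpl; auto).
    destruct (INR_unbounded (/ g b)) as [Nb HNb].
    exists (N + Nb)%nat. rewrite plus_INR. pose proof (pos_INR Nb). split; [lra|].
    intros a [<-|Ha].
    + apply Rmult_gt_compat_r with (r := g b) in HNb; [|exact Hb].
      rewrite Rinv_l in HNb by lra. pose proof (pos_INR N). nra.
    + pose proof (HF a Ha). assert (0 < g a) by (apply Hg; simpl; auto). nra.
Qed.

Lemma in_group_prod_pow {I} (F : list (I -> C)) z :
  (forall a, In a F -> in_group a) -> in_group (prod_pow F z).
Proof.
  intros HF j. rewrite (prod_pow_polar F z j (fun a => ln (Cmod (a j))) (fun a => Carg (a j))).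
  - apply polar_neq0.
  - intros a Ha. apply polar_Carg, HF, Ha.
Qed.

Lemma exists_combination_near_far {I} (F : list (I -> C)) (i : I) (J : list I) eps :
  NoDup F -> 0 < eps -> (2 * length J < length F)%nat ->
  (forall a, In a F -> in_group a /\ Cmod (a i) <> 1) ->
  exists z, (forall j, In j J -> Cmod (Cminus (prod_pow F z j) 1) < eps) /\
    exists a, In a F /\ / 2 <= Cmod (Cminus (zpow_grp a (z a) i) 1).
Proof.
  intros HF He Hlen HFA.
  destruct (polar_near_1 eps He) as [d [Hd Hnear]].
  assert (Hpol : forall a j, In a F -> a j = polar (ln (Cmod (a j))) (Carg (a j)))
    by (intros a j Ha; apply polar_Carg, HFA, Ha).
  assert (Hln : forall a, In a F -> 0 < Rabs (ln (Cmod (a i)))).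
  { intros a Ha. destruct (HFA a Ha) as [Hg Hm]. apply Rabs_pos_lt. intro H0. apply Hm.
    rewrite <- (exp_ln (Cmod (a i))), H0, exp_0 by apply Cmod_gt_0, Hg. reflexivity. }
  destruct (exists_nat_mult_ge_1 F _ Hln) as [N [HN HNF]].
  set (cs := map (fun j a => ln (Cmod (a j))) J ++ map (fun j a => Carg (a j)) J).
  destruct (dirichlet_small_combination F cs (d / INR N)) as [z0 [[a0 [Ha0 Hz0]] Hsmall]];
    [exact HF | apply Rdiv_lt_0_compat; assumption
    | unfold cs; rewrite length_app, !length_map; lia |].
  (* scaling by N keeps the forms below d but pushes |z a0 * ln|a0 i|| to at least 1 *)
  set (z := fun a => (Z.of_nat N * z0 a)%Z).
  assert (Hz : forall c, In c cs -> Rabs (lin_comb F z c) < d).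
  { intros c Hc. unfold z.
    rewrite lin_comb_scale, <- INR_IZR_INZ, Rabs_mult, (Rabs_right (INR N)) by lra.
    specialize (Hsmall c Hc). apply (Rmult_lt_compat_l (INR N)) in Hsmall; [|exact HN].
    replace (INR N * (d / INR N)) with d in Hsmall by (field; lra). exact Hsmall. }
  exists z. split.
  - intros j Hj.
    rewrite (prod_pow_polar F z j (fun a => ln (Cmod (a j))) (fun a => Carg (a j)))
      by (intros a Ha; apply Hpol, Ha).
    apply Hnear; apply Hz; unfold cs; apply in_or_app; [left|right];
      apply in_map_iff; exists j; auto.
  - exists a0. split; [exact Ha0|]. unfold zpow_grp.
    rewrite (Hpol a0 i Ha0), Czpow_polar. apply polar_far_from_1.
    unfold z. rewrite mult_IZR, <- INR_IZR_INZ, !Rabs_mult, (Rabs_right (INR N)) by lra.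
    assert (1 <= Rabs (IZR (z0 a0))) by (rewrite Rabs_Zabs; apply IZR_le; lia).
    pose proof (HNF a0 Ha0). pose proof (Rabs_pos (ln (Cmod (a0 i)))). nra.
Qed.

Theorem lemma2p5 (I : Type) (HI : inhabited I) (A : (I -> C) -> Prop)
  (HA : forall a, A a -> in_group a) (Hind : top_indep A) :
  forall i : I, exists l : list (I -> C),
    forall a, A a -> Cmod (a i) <> 1 -> In a l.
Proof.
  intros i. apply NNPP. intro Hfin. destruct Hind as [_ Hind].
  set (W := fun x : I -> C => Cmod (Cminus (x i) 1) < / 2).
  destruct (Hind W) as [U [[J [eps [Heps HU]]] HUW]].
  { exists (i :: nil), (/ 2). split; [lra|]. intros x _ Hx. apply Hx. simpl; auto. }
  destruct (long_lists_of_infinite (fun a => A a /\ Cmod (a i) <> 1)) with (k := S (2 * length J))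
    as [F [HFl [HFnd HFA]]].
  { intros [l Hl]. apply Hfin. exists l. intros a Ha Hm. apply Hl. auto. }
  destruct (exists_combination_near_far F i J eps) as [z [Hnear [a [Ha Hfar]]]];
    [assumption | assumption | lia | intros a Ha; split; [apply HA|]; apply HFA, Ha |].
  assert (HUz : U (prod_pow F z)).
  { apply HU; [apply in_group_prod_pow; intros b Hb; apply HA, HFA, Hb | exact Hnear]. }
  specialize (HUW F z HFnd (fun b Hb => proj1 (HFA b Hb)) HUz a Ha). unfold W in HUW. lra.
Qed.
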